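(* Let $P$ be an arbitrary set of atomic propositions and let $\mathcal{C}: 2^P \to 2^P$ be a C-logics over $P$. Let $\mathcal{L}$ be the closure of $P$ under a binary connective $\wedge$ and a unary connective $\neg$ (the set of formulas built from $P$ with $\wedge, \neg$). Then there exists a C-logics $\mathcal{C}': 2^{\mathcal{L}} \to 2^{\mathcal{L}}$ that satisfies $\wedge$-R, $\neg$-R1 and $\neg$-R2, such that $\mathcal{C}(A) = P \cap \mathcal{C}'(A)$ for every $A \subseteq P$.
   Context: A C-logics on a set $S$ is a map $\mathcal{D}: 2^S\to 2^S$ satisfying Inclusion ($A \subseteq \mathcal{D}(A)$) and Cumulativity ($A\subseteq B\subseteq \mathcal{D}(A) \Rightarrow \mathcal{D}(A)=\mathcal{D}(B)$) for all $A,B\subseteq S$. For $\mathcal{C}'$ on $\mathcal{L}$, writing $\mathcal{C}'(A, a_1,\dots,a_k)$ for $\mathcal{C}'(A\cup\{a_1,\dots,a_k\})$: $\wedge$-R: $\mathcal{C}'(A, a\wedge b) = \mathcal{C}'(A,a,b)$; $\neg$-R1: $\mathcal{C}'(A,a,\neg a) = \mathcal{L}$; $\neg$-R2: if $\mathcal{C}'(A,\neg a)=\mathcal{L}$ then $a\in\mathcal{C}'(A)$; for all $A\subseteq\mathcal{L}$, $a,b\in\mathcal{L}$. *)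

Definition subset {S : Type} (A B : S -> Prop) : Prop := forall x, A x -> B x.
Definition seteq {S : Type} (A B : S -> Prop) : Prop := forall x, A x <-> B x.

Definition is_C_logics {S : Type} (D : (S -> Prop) -> (S -> Prop)) : Prop :=
  (forall A, subset A (D A)) /\
  (forall A B, subset A B -> subset B (D A) -> seteq (D A) (D B)).

Inductive form (P : Type) : Type :=
| Atom : P -> form P
| And : form P -> form P -> form P
| Neg : form P -> form P.
Arguments Atom {P} _.
Arguments And {P} _ _.
Arguments Neg {P} _.

Definition add {S : Type} (A : S -> Prop) (a : S) : S -> Prop :=
  fun x => A x \/ x = a.

Definition fullset {S : Type} : S -> Prop := fun _ => True.

Definition and_R {P : Type} (C' : (form P -> Prop) -> (form P -> Prop)) : Prop :=
  forall A a b, seteq (C' (add A (And a b))) (C' (add (add A a) b)).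

Definition neg_R1 {P : Type} (C' : (form P -> Prop) -> (form P -> Prop)) : Prop :=
  forall A a, seteq (C' (add (add A a) (Neg a))) fullset.

Definition neg_R2 {P : Type} (C' : (form P -> Prop) -> (form P -> Prop)) : Prop :=
  forall A a, seteq (C' (add A (Neg a))) fullset -> C' A a.

Definition embed {P : Type} (A : P -> Prop) : form P -> Prop :=
  fun f => exists p, A p /\ f = Atom p.

From Stdlib Require Import Classical.

(* Read formulas classically over valuations [v : P -> Prop]. For a set of
   formulas A let v_A be C applied to the atoms true in every model of A, and
   let C'(A) be the theory of v_A when v_A is a model of A, and the classical
   consequences of A otherwise. If A ⊆ B ⊆ C'(A), in the first case the atoms
   entailed by B lie between those entailed by A and v_A, so cumulativity of C
   gives v_B = v_A; in the second case A and B have the same models. For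
   A ⊆ P the atoms entailed by A are A itself, and v_A = C(A) is a model of A,
   which gives conservativity. Finally C'(A) always contains the classical
   consequences of A and has a model whenever A has one; this yields the two
   negation rules. *)

Lemma C_logics_seteq {S : Type} (D : (S -> Prop) -> (S -> Prop)) :
  is_C_logics D -> forall A B, seteq A B -> seteq (D A) (D B).
Proof.
  intros [Hincl Hcum] A B HAB. apply Hcum.
  - intros x Hx. apply HAB, Hx.
  - intros x Hx. apply Hincl, HAB, Hx.
Qed.

Section Extension.

Variable P : Type.

Fixpoint sat (v : P -> Prop) (f : form P) : Prop :=
  match f with
  | Atom p => v p
  | And a b => sat v a /\ sat v b
  | Neg a => ~ sat v a
  end.

Lemma sat_seteq (v w : P -> Prop) : seteq v w -> forall f, sat v f <-> sat w f.
Proof.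
  intros Hvw f. induction f; simpl; firstorder.
Qed.

Definition models (A : form P -> Prop) (v : P -> Prop) : Prop :=
  forall f, A f -> sat v f.

Definition entailed_atoms (A : form P -> Prop) : P -> Prop :=
  fun p => forall v, models A v -> v p.

Lemma entailed_atoms_mono (A B : form P -> Prop) :
  subset A B -> subset (entailed_atoms A) (entailed_atoms B).
Proof.
  intros HAB p Hp v Hv. apply Hp. intros f Hf. apply Hv, HAB, Hf.
Qed.

Lemma entailed_atoms_model (A : form P -> Prop) (v : P -> Prop) :
  models A v -> subset (entailed_atoms A) v.
Proof.
  intros Hv p Hp. apply Hp, Hv.
Qed.

Lemma entailed_atoms_embed (A : P -> Prop) : seteq (entailed_atoms (embed A)) A.
Proof.
  intros p. split.
  - intros Hp. apply (Hp A). intros f [q [Hq ->]]. exact Hq.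
  - intros Hp v Hv. apply (Hv (Atom p)). exists p. split; [exact Hp | reflexivity].
Qed.

Variable C : (P -> Prop) -> (P -> Prop).
Hypothesis HC : is_C_logics C.

Definition preferred_val (A : form P -> Prop) : P -> Prop := C (entailed_atoms A).

Definition extend_logic (A : form P -> Prop) : form P -> Prop :=
  fun f => (models A (preferred_val A) /\ sat (preferred_val A) f) \/
           (~ models A (preferred_val A) /\ forall v, models A v -> sat v f).

Lemma extend_logic_modelled (A : form P -> Prop) :
  models A (preferred_val A) -> seteq (extend_logic A) (sat (preferred_val A)).
Proof.
  intros HA f. unfold extend_logic. tauto.
Qed.

Lemma extend_logic_unmodelled (A : form P -> Prop) :
  ~ models A (preferred_val A) ->
  seteq (extend_logic A) (fun f => forall v, models A v -> sat v f).
Proof.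
  intros HA f. unfold extend_logic. tauto.
Qed.

Lemma extend_logic_consequence (A : form P -> Prop) (f : form P) :
  (forall v, models A v -> sat v f) -> extend_logic A f.
Proof.
  intros Hf. unfold extend_logic.
  destruct (classic (models A (preferred_val A))) as [HA | HA]; auto.
Qed.

Lemma extend_logic_satisfiable (A : form P -> Prop) (v : P -> Prop) :
  models A v -> exists w, models (extend_logic A) w.
Proof.
  intros Hv. destruct (classic (models A (preferred_val A))) as [HA | HA].
  - exists (preferred_val A). intros f Hf. apply (extend_logic_modelled A HA), Hf.
  - exists v. intros f Hf. apply (extend_logic_unmodelled A HA f); assumption.
Qed.

Lemma extend_logic_models_seteq (A B : form P -> Prop) :
  (forall v, models A v <-> models B v) -> seteq (extend_logic A) (extend_logic B).
Proof.
  intros HAB.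
  assert (Hatoms : seteq (entailed_atoms A) (entailed_atoms B)).
  { intros p. unfold entailed_atoms. split; intros Hp v Hv; apply Hp, HAB, Hv. }
  pose proof (C_logics_seteq C HC _ _ Hatoms) as Hval.
  assert (Hmod : models A (preferred_val A) <-> models B (preferred_val B)).
  { rewrite HAB. unfold models.
    split; intros Hm f Hf; apply (sat_seteq _ _ Hval), Hm, Hf. }
  intros f. unfold extend_logic. rewrite Hmod, (sat_seteq _ _ Hval f).
  setoid_rewrite HAB. tauto.
Qed.

Lemma extend_logic_inclusion (A : form P -> Prop) : subset A (extend_logic A).
Proof.
  intros f Hf. apply extend_logic_consequence. intros v Hv. apply Hv, Hf.
Qed.

Lemma extend_logic_cumulative (A B : form P -> Prop) :
  subset A B -> subset B (extend_logic A) ->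
  seteq (extend_logic A) (extend_logic B).
Proof.
  intros HAB HBA. destruct (classic (models A (preferred_val A))) as [HA | HA].
  - assert (HB : models B (preferred_val A)).
    { intros f Hf. apply (extend_logic_modelled A HA), HBA, Hf. }
    assert (Hval : seteq (preferred_val A) (preferred_val B)).
    { apply (proj2 HC).
      - apply entailed_atoms_mono, HAB.
      - apply entailed_atoms_model, HB. }
    assert (HB' : models B (preferred_val B)).
    { intros f Hf. apply (sat_seteq _ _ Hval), HB, Hf. }
    intros f. rewrite (extend_logic_modelled A HA f), (extend_logic_modelled B HB' f).
    apply sat_seteq, Hval.
  - apply extend_logic_models_seteq. intros v. split.
    + intros Hv f Hf. apply (extend_logic_unmodelled A HA f); [apply HBA, Hf | exact Hv].
    + intros Hv f Hf. apply Hv, HAB, Hf.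
Qed.

Lemma extend_logic_C_logics : is_C_logics extend_logic.
Proof.
  split.
  - exact extend_logic_inclusion.
  - exact extend_logic_cumulative.
Qed.

Lemma extend_logic_and_R : and_R extend_logic.
Proof.
  intros A a b. apply extend_logic_models_seteq. intros v. unfold models, add. split.
  - intros Hv f [[Hf | ->] | ->].
    + apply Hv. auto.
    + apply (Hv (And a b)). auto.
    + apply (Hv (And a b)). auto.
  - intros Hv f [Hf | ->]; simpl; auto.
Qed.

Lemma extend_logic_neg_R1 : neg_R1 extend_logic.
Proof.
  intros A a f. split; [intros _; exact I |]. intros _.
  apply extend_logic_consequence. intros v Hv. exfalso.
  apply (Hv (Neg a)); [right; reflexivity |]. apply Hv. left. right. reflexivity.
Qed.

Lemma extend_logic_neg_R2 : neg_R2 extend_logic.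
Proof.
  intros A a Hfull. apply extend_logic_consequence. intros v Hv.
  apply NNPP. intros Hna.
  assert (Hmodel : models (add A (Neg a)) v).
  { intros f [Hf | ->]; [apply Hv, Hf | exact Hna]. }
  destruct (extend_logic_satisfiable _ _ Hmodel) as [w Hw].
  apply (Hw (Neg a)); [apply Hfull; exact I |]. apply Hw, Hfull. exact I.
Qed.

Lemma extend_logic_conservative (A : P -> Prop) :
  seteq (C A) (fun p => extend_logic (embed A) (Atom p)).
Proof.
  pose proof (C_logics_seteq C HC _ _ (entailed_atoms_embed A)) as Hval.
  assert (Hmod : models (embed A) (preferred_val (embed A))).
  { intros f [q [Hq ->]]. apply Hval, (proj1 HC), Hq. }
  intros p. rewrite (extend_logic_modelled _ Hmod (Atom p)).
  symmetry. apply Hval.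
Qed.

End Extension.

Theorem theorem6 (P : Type) (C : (P -> Prop) -> (P -> Prop)) :
  is_C_logics C ->
  exists C' : (form P -> Prop) -> (form P -> Prop),
    is_C_logics C' /\ and_R C' /\ neg_R1 C' /\ neg_R2 C' /\
    (forall A : P -> Prop, seteq (C A) (fun p => C' (embed A) (Atom p))).
Proof.
  intros HC. exists (extend_logic P C).
  split; [exact (extend_logic_C_logics P C HC) |].
  split; [exact (extend_logic_and_R P C HC) |].
  split; [exact (extend_logic_neg_R1 P C) |].
  split; [exact (extend_logic_neg_R2 P C) |].
  exact (extend_logic_conservative P C HC).
Qed.
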